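(* Let $x$ be an infinite word and let $k,\lambda\in\mathbb{N}=\{1,2,3,\dots\}$ be such that $$\underline{d}(\mathrm{AP}(x,k,\lambda)) < \left(1+\left\lfloor\frac{k^2-k}{\lambda^2+\lambda}\right\rfloor\right)^{-1}.$$ Then for every positive integer $\ell$ there is a word $u$ with $|u|\le (k-1)\left\lfloor\frac{k^2-k}{\lambda^2+\lambda}\right\rfloor$ such that $u^\ell$ is a factor of $x$.
   Context: A factor is a contiguous subword; $|u|$ is the length of $u$ and $u^\ell$ is $\ell$ concatenated copies of $u$. A $(k,\lambda)$-anti-power is a word $w=w_1\cdots w_k$ with $|w_1|=\cdots=|w_k|$ such that $|\{i: w_i=w_j\}|\le\lambda$ for each $j\in\{1,\dots,k\}$. $\mathrm{AP}(x,k,\lambda)$ is the set of $m\in\mathbb{N}$ such that the prefix of $x$ of length $km$ is a $(k,\lambda)$-anti-power. For $S\subseteq\mathbb{N}$, the lower density is $\underline{d}(S)=\liminf_{n\to\infty}|S\cap\{1,\dots,n\}|/n$. *)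

From HB Require Import structures.
From mathcomp Require Import all_boot all_order all_algebra.
From mathcomp Require Import all_classical all_reals all_analysis.
Set Implicit Arguments. Unset Strict Implicit. Unset Printing Implicit Defensive.
Import Order.TTheory GRing.Theory Num.Theory.

(* Infinite words over an alphabet T (any type with decidable equality)
   are maps nat -> T, indexed from 0:  x = x 0 x 1 x 2 ... *)

Definition block (T : eqType) (x : nat -> T) (m i : nat) : seq T :=
  mkseq (fun t => x (i * m + t)) m.

(* m \in AP(x,k,lambda): m >= 1 and the prefix of x of length k*m,
   cut into w_1 ... w_k with |w_i| = m, satisfies
   |{i : w_i = w_j}| <= lambda for every j. *)
Definition inAP (T : eqType) (x : nat -> T) (k lambda m : nat) : bool :=
  (0 < m) &&
  [forall j : 'I_k,
     count (fun i => block x m i == block x m j) (iota 0 k) <= lambda].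

Definition count_upto (S : pred nat) (n : nat) : nat :=
  \sum_(1 <= m < n.+1) (S m : nat).

(* lower density: liminf_{n -> oo} |S \cap {1..n}| / n
   (sequence reindexed by n.+1 to avoid n = 0; it lies in [0,1]) *)
Definition lower_density (R : realType) (S : pred nat) : R :=
  limn_inf (fun n : nat => ((count_upto S n.+1)%:R / (n.+1)%:R : R)%R).

Definition wpow (T : Type) (u : seq T) (l : nat) : seq T := flatten (nseq l u).

Definition factor_of (T : eqType) (w : seq T) (x : nat -> T) : Prop :=
  exists p : nat, mkseq (fun t => x (p + t)) (size w) = w.

(* If the lower density of AP(x,k,lambda) is below 1/(N+1), with
   N = floor((k^2-k)/(lambda^2+lambda)), then arbitrarily far out there are
   N+1 consecutive lengths m, m+1, ..., m+N none of which is an anti-power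
   length.  For each of them some block class has more than lambda members,
   which yields at least lambda^2+lambda ordered pairs (a,b), a <> b, with
   equal blocks; as (N+1)(lambda^2+lambda) > k^2-k, two lengths m+s1 < m+s2
   share such a pair a < b.  Equality of the blocks a and b at both lengths
   makes x locally periodic with period (b-a)(s2-s1) <= (k-1)N on a stretch
   of length about m, and since m can be taken as large as we like this
   stretch contains the l-th power of a period. *)

From HB Require Import structures.
From mathcomp Require Import all_boot all_order all_algebra.
From mathcomp Require Import all_classical all_reals all_analysis.
From mathcomp Require Import zify lra.
Import Order.TTheory GRing.Theory Num.Theory.

Set Implicit Arguments.
Unset Strict Implicit.
Unset Printing Implicit Defensive.

Definition offdiag (U : finType) (E : {set U}) : {set U * U} :=
  [set p | [&& p.1 \in E, p.2 \in E & p.1 != p.2]].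

Lemma card_offdiag (U : finType) (E : {set U}) : #|offdiag E| = #|E| ^ 2 - #|E|.
Proof.
pose X := [set p : U * U | (p.1 \in E) && (p.2 \in E)].
pose diag := (fun a => (a, a)) @: E.
have diagX : diag \subset X.
  by apply/fintype.subsetP => _ /imsetP[a aE ->]; rewrite inE aE.
have -> : offdiag E = X :\: diag.
  apply/setP => -[a b]; rewrite !inE /=.
  have [<-|neq_ab] := eqVneq a b.
    by case aE: (a \in E); rewrite ?andbF // (imset_f (fun c => (c, c)) aE).
  have -> : ((a, b) \in diag) = false.
    by apply/imsetP => -[c _ [ac bc]]; rewrite ac bc eqxx in neq_ab.
  by rewrite andbT.
have card_diag : #|diag| = #|E| by rewrite card_imset // => a b [].
have card_X : #|X| = #|E| ^ 2.
  by rewrite -mulnn -cardsX; congr #|_|; apply/setP => p; rewrite !inE.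
by rewrite cardsD (finset.setIidPr diagX) card_diag card_X.
Qed.

Lemma exists_overlapping_sets (U I : finType) (A : I -> {set U}) (D : {set U}) :
  (forall i, A i \subset D) -> #|D| < \sum_i #|A i| ->
  exists i j, i != j /\ ~~ [disjoint A i & A j].
Proof.
move=> subD ltD.
have [/existsP[i /existsP[j /andP[ij meet]]]|/existsPn disj] :=
  boolP [exists i, exists j, (i != j) && ~~ [disjoint A i & A j]].
  by exists i, j.
have disjA i j : i != j -> [disjoint A i & A j].
  by move=> ij; have /existsPn/(_ j) := disj i; rewrite ij /= negbK.
move: ltD; rewrite ltnNge => /negP[].
have card_cup : #|\bigcup_i A i| = \sum_i #|A i|.
  rewrite -sum1_card (partition_disjoint_bigcup _ _ disjA).
  by apply: eq_bigr => i _; rewrite sum1_card.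
rewrite -card_cup; apply: subset_leq_card; exact/bigcupsP.
Qed.

Lemma card_ord_count k (P : pred nat) : #|[set i : 'I_k | P i]| = count P (iota 0 k).
Proof. by rewrite -sum1_count -[in iota 0 k](subn0 k) big_mkord sum1_card cardsE. Qed.

Lemma wpow_mkseq (T : Type) (f : nat -> T) q l :
  wpow (mkseq f q) l = mkseq (fun t => f (t %% q)) (l * q).
Proof.
elim: l => [|l IH] //; rewrite /wpow /= -/(wpow _ _) IH mulSn /mkseq iotaD map_cat.
congr (_ ++ _).
  by apply/eq_in_map => t; rewrite mem_iota => /andP[_ ltq]; rewrite modn_small.
have -> : iota (0 + q) (l * q) = map (addn q) (iota 0 (l * q)) by rewrite -iotaDl add0n addn0.
rewrite -map_comp.
by apply: eq_map => t /=; rewrite modnDl.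
Qed.

Section Blocks.
Variables (T : eqType) (x : nat -> T).

Lemma block_eq_nth m a b t :
  block x m a = block x m b -> t < m -> x (a * m + t) = x (b * m + t).
Proof. by move=> /(congr1 (nth (x 0) ^~ t)) + lt_t; rewrite /block !nth_mkseq. Qed.

Lemma periodic_factor p q L l : 0 < q -> l * q <= L + q ->
  (forall t, t < L -> x (p + t) = x (p + t + q)) ->
  factor_of (wpow (mkseq (fun t => x (p + t)) q) l) x.
Proof.
move=> q_gt0 lqL per; exists p.
have per_mod t : t < L + q -> x (p + t) = x (p + t %% q).
  elim/ltn_ind: t => t IH ltLq; have [ltq|leq_t] := ltnP t q; first by rewrite modn_small.
  rewrite -(subnK leq_t) modnDr addnA -per; last by lia.
  by apply: IH; lia.
rewrite wpow_mkseq size_mkseq /mkseq; apply/eq_in_map => t.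
by rewrite mem_iota => /andP[_ lt_t]; apply: per_mod; lia.
Qed.

Lemma coinciding_blocks_period m s a d t :
  block x m a = block x m (a + d) -> block x (m + s) a = block x (m + s) (a + d) ->
  t + a * s < m -> x (a * (m + s) + d * m + t) = x (a * (m + s) + d * m + t + d * s).
Proof.
move=> eq_m eq_ms lt_t.
have -> : a * (m + s) + d * m + t + d * s = (a + d) * (m + s) + t by nia.
have -> : a * (m + s) + d * m + t = (a + d) * m + (a * s + t) by nia.
rewrite -(block_eq_nth eq_m (t := a * s + t)); last by lia.
rewrite -(block_eq_nth eq_ms (t := t)); last by lia.
by congr x; nia.
Qed.

Definition coinciding_pairs k m : {set 'I_k * 'I_k} :=
  [set p : 'I_k * 'I_k | (p.1 != p.2) && (block x m p.1 == block x m p.2)].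

Lemma not_inAP_coinciding_pairs k lambda m : 0 < m -> ~~ inAP x k lambda m ->
  lambda ^ 2 + lambda <= #|coinciding_pairs k m|.
Proof.
rewrite /inAP => -> /forallPn[j]; rewrite -ltnNge -card_ord_count.
set E := [set i | _] => ltE.
have sub : offdiag E \subset coinciding_pairs k m.
  apply/fintype.subsetP => -[a b]; rewrite !inE /= => /and3P[/eqP-> /eqP-> ->].
  by rewrite eqxx.
by apply: leq_trans (subset_leq_card sub); rewrite card_offdiag; nia.
Qed.

End Blocks.

Lemma coinciding_pair_at_two_lengths (T : eqType) (x : nat -> T) k lambda N m :
  k ^ 2 - k < N.+1 * (lambda ^ 2 + lambda) -> 0 < m ->
  (forall s, s <= N -> ~~ inAP x k lambda (m + s)) ->
  exists s1 s2 a b, [/\ s1 < s2 <= N, a < b < k,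
    block x (m + s1) a = block x (m + s1) b & block x (m + s2) a = block x (m + s2) b].
Proof.
move=> ltN m_gt0 notAP.
have [i [j [neq_ij]]] : exists i j : 'I_N.+1, i != j /\
    ~~ [disjoint coinciding_pairs x k (m + i) & coinciding_pairs x k (m + j)].
  apply: (exists_overlapping_sets (D := offdiag [set: 'I_k])).
    by move=> i; apply/fintype.subsetP => p; rewrite !inE => /andP[->].
  rewrite card_offdiag cardsT card_ord (leq_trans ltN) // -[X in X * _]card_ord.
  rewrite -sum_nat_const; apply: leq_sum => i _.
  by apply: not_inAP_coinciding_pairs; [rewrite addn_gt0 m_gt0 | apply: notAP; rewrite -ltnS].
rewrite -setI_eq0 => /set0Pn[[a b]]; rewrite !inE /=.
move=> /andP[/andP[neq_ab /eqP eq_i] /andP[_ /eqP eq_j]].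
wlog lt_ij : i j neq_ij eq_i eq_j / i < j.
  move=> W; case: (ltngtP i j) => [|lt_ji|/val_inj eq_ij]; first exact: W.
    by apply: (W j i) => //; rewrite eq_sym.
  by rewrite eq_ij eqxx in neq_ij.
wlog lt_ab : a b neq_ab eq_i eq_j / a < b.
  move=> W; case: (ltngtP a b) => [|lt_ba|/val_inj eq_ab]; first exact: W.
    by apply: (W b a) => //; rewrite eq_sym.
  by rewrite eq_ab eqxx in neq_ab.
by exists i, j, a, b; split; rewrite ?lt_ij ?lt_ab //= -ltnS.
Qed.

Lemma power_factor_of_nonAP_run (T : eqType) (x : nat -> T) k lambda N m l :
  k ^ 2 - k < N.+1 * (lambda ^ 2 + lambda) -> 0 < m -> l.+1 * (k * N) <= m ->
  (forall s, s <= N -> ~~ inAP x k lambda (m + s)) ->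
  exists u : seq T, 0 < size u /\ size u <= (k - 1) * N /\ factor_of (wpow u l) x.
Proof.
move=> ltN m_gt0 lkN_le_m notAP.
have [s1 [s2 [a [b [/andP[lt_s12 le_s2N] /andP[lt_ab lt_bk] eq_s1 eq_s2]]]]] :=
  coinciding_pair_at_two_lengths ltN m_gt0 notAP.
set m1 := m + s1; set s := s2 - s1; set d := b - a.
have eq_m1 : block x m1 a = block x m1 (a + d) by rewrite subnKC // ltnW.
have eq_m1s : block x (m1 + s) a = block x (m1 + s) (a + d).
  by rewrite -addnA subnKC ?subnKC // ltnW.
have ds_gt0 : 0 < d * s by rewrite muln_gt0 !subn_gt0 lt_ab lt_s12.
have ds_le : d * s <= (k - 1) * N by apply: leq_mul; lia.
have as_le : a * s <= k * N by apply: leq_mul; lia.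
have lds_le : l * (d * s) <= l * (k * N) by apply/leq_mul/(leq_trans ds_le)/leq_mul; lia.
exists (mkseq (fun t => x (a * (m1 + s) + d * m1 + t)) (d * s)); rewrite size_mkseq.
do 2!split => //; apply: (periodic_factor (L := m1 - a * s)) => //.
  by move: lkN_le_m; rewrite mulSn /m1; lia.
by move=> t lt_t; apply: coinciding_blocks_period => //; lia.
Qed.

Lemma limn_inf_ge_eventually (R : realType) (u : R^nat) (c : R) n0 :
  bounded_fun u -> (forall n, n0 <= n -> (c <= u n)%R) -> (c <= limn_inf u)%R.
Proof.
move=> bnd_u ge_c; rewrite limn_infE //.
apply: (@le_trans _ _ (infs u n0)); last first.
  by apply: ub_le_sup; [exact: bounded_fun_has_ubound_infs | exists n0].
apply: lb_le_inf; first by exists (u n0), n0 => /=.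
by move=> _ [n /= le_n0n <-]; exact: ge_c.
Qed.

Section CountUpto.
Variable S : pred nat.

Lemma count_uptoS n : count_upto S n.+1 = count_upto S n + S n.+1.
Proof. by rewrite /count_upto big_nat_recr. Qed.

Lemma leq_count_upto : {homo count_upto S : a b / a <= b}.
Proof.
move=> a b /subnK <-; elim: (b - a) => [|j IH] //.
by rewrite addSn count_uptoS (leq_trans IH) ?leq_addr.
Qed.

Lemma count_upto_le n : count_upto S n <= n.
Proof.
elim: n => [|n IH]; first by rewrite /count_upto big_geq.
by rewrite count_uptoS; case: (S n.+1) => /=; lia.
Qed.

Lemma count_upto_lb M N : (forall m, M <= m -> exists2 s, s <= N & S (m + s)) ->
  forall n, n <= N.+1 * count_upto S n + (M + N).
Proof.
move=> hit; elim/ltn_ind => n IH; have [|lt_n] := leqP n (M + N); first lia.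
pose n' := n - N.+1.
have [s le_sN S_s] := hit n'.+1 ltac:(lia).
have lt_count : count_upto S n' < count_upto S n.
  apply: (@leq_trans (count_upto S (n' + s).+1)); last by apply: leq_count_upto; lia.
  by rewrite count_uptoS -addSn S_s addn1 ltnS leq_count_upto ?leq_addr.
have := IH n' ltac:(lia); have := leq_mul (leqnn N.+1) lt_count; rewrite mulnS; lia.
Qed.

End CountUpto.

Section LowerDensity.
Local Open Scope ring_scope.
Variables (R : realType) (S : pred nat).

Lemma lower_density_ge M N :
  (forall m, (M <= m)%N -> exists2 s, (s <= N)%N & S (m + s)) ->
  N.+1%:R^-1 <= lower_density R S.
Proof.
move=> hit; have count_lb := count_upto_lb hit.
set b : R := N.+1%:R; set K : R := (M + N)%:R.
apply/ler_addgt0Pr => e e_gt0; rewrite -lerBlDr.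
have [n0 Ke_lt] : exists n0 : nat, K / e < n0%:R.
  by exists (Num.Def.archi_bound (K / e)); apply: archi_boundP; rewrite divr_ge0 // ltW.
apply: (limn_inf_ge_eventually (n0 := n0)).
  exists 1; split => // r r_gt1 n _ /=.
  rewrite ger0_norm // (le_trans _ (ltW r_gt1)) // ler_pdivrMr ?ltr0n // mul1r.
  by rewrite ler_nat count_upto_le.
move=> n le_n0n; set C : R := (count_upto S n.+1)%:R; set a : R := n.+1%:R.
have a_gt0 : 0 < a by rewrite ltr0n.
have a_le : a <= b * C + K.
  by rewrite -natrM -natrD ler_nat; exact: count_lb.
have K_le : K <= e * a.
  by rewrite mulrC -ler_pdivrMr // (le_trans (ltW Ke_lt)) // ler_nat; lia.
have K_ge0 : 0 <= K by [].
have b_gt0 : 0 < b by rewrite ltr0n.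
have binvK : b^-1 * (b * C) = C by rewrite mulrA mulVf ?mul1r // gt_eqF.
have binv_gt0 : 0 < b^-1 by rewrite invr_gt0.
have binv_le1 : b^-1 <= 1 by rewrite invr_le1 ?unitf_gt0 // ler1n.
rewrite ler_pdivlMr // mulrBl lerBlDr (@le_trans _ _ (C + K)) ?lerD2l //.
rewrite (le_trans (ler_wpM2l (ltW binv_gt0) a_le)) // mulrDr binvK lerD2l.
exact: ler_piMl.
Qed.

Lemma exists_nonmember_run M N : lower_density R S < N.+1%:R^-1 ->
  exists2 m, (M <= m)%N & forall s, (s <= N)%N -> ~~ S (m + s).
Proof.
move=> lt_density.
have [//|no_run] := pselect (exists2 m, (M <= m)%N & forall s, (s <= N)%N -> ~~ S (m + s)).
suff : N.+1%:R^-1 <= lower_density R S by rewrite leNgt lt_density.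
apply: (lower_density_ge (M := M)) => m le_Mm.
have [//|no_hit] := pselect (exists2 s, (s <= N)%N & S (m + s)).
by case: no_run; exists m => // s le_sN; apply/negP => S_ms; apply: no_hit; exists s.
Qed.

End LowerDensity.

Theorem corollary3p5 (R : realType) (T : eqType) (x : nat -> T)
    (k lambda : nat) (hk : (0 < k)%N) (hl : (0 < lambda)%N) :
  (lower_density R (inAP x k lambda) <
     ((1 + (k ^ 2 - k) %/ (lambda ^ 2 + lambda))%N%:R)^-1)%R ->
  forall l : nat, (0 < l)%N ->
    exists u : seq T,
      (0 < size u)%N /\
      (size u <= (k - 1) * ((k ^ 2 - k) %/ (lambda ^ 2 + lambda)))%N /\
      factor_of (wpow u l) x.
Proof.
move=> lt_density l _.
set N := (k ^ 2 - k) %/ (lambda ^ 2 + lambda) in lt_density *.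
have ltN : k ^ 2 - k < N.+1 * (lambda ^ 2 + lambda).
  by apply: ltn_ceil; rewrite addn_gt0 hl orbT.
have [m lt_m notAP] := exists_nonmember_run (l.+1 * (k * N)).+1 lt_density.
by apply: (power_factor_of_nonAP_run ltN _ (ltnW lt_m) notAP); apply: leq_ltn_trans lt_m.
Qed.
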